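(* Fix $q$, an integer $m_q$ and $\hat\omega\in\mathbb{R}$. Let $(f^n_{q_i})$ and $(f^{eq^n}_{q_i})$, indexed by grid index $i\in\mathbb{Z}$ and time level $n$, satisfy the general lattice Boltzmann equation $$f^{n+1}_{q_i}=(1-\hat\omega)f^n_{q_{i-m_q}}+\hat\omega f^{eq^n}_{q_{i-m_q}}$$ for all $i$ and all time levels, and define $f^{neq^n}_{q_i}:=f^n_{q_i}-f^{eq^n}_{q_i}$. Let $N\in\mathbb{N}$ and suppose $f^{neq^{n-N}}_{q_{i-(N+1)m_q}}=0$. Then the lattice Boltzmann equation is equivalent to $$f^{n+1}_{q_i}=\hat\omega\left(\sum_{k=0}^{N-1}(1-\hat\omega)^k f^{eq^{n-k}}_{q_{i-(k+1)m_q}}\right)+(1-\hat\omega)^N f^{eq^{n-N}}_{q_{i-(N+1)m_q}}.$$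
   Context: This is the one-dimensional lattice Boltzmann equation on a uniform grid $x_i$ with time levels $t_n$: $f^{n+1}_{q_i}:=f_q(x_i,t_n+\Delta t_n)$, $f^n_{q_{i-m_q}}:=f_q(x_i-v_{q,n}\Delta t_n,t_n)$ and $f^{eq^n}_{q_{i-m_q}}:=f^{eq}_q(U(x_i-v_{q,n}\Delta t_n,t_n))$, where the discrete velocity is $v_{q,n}=m_q\lambda_n$ with $m_q\in\mathbb{Z}$ and $\Delta t_n=\Delta x/\lambda_n$. Here $\hat\omega=\omega=\Delta t/\epsilon$ for the explicit discretisation and $\hat\omega=\omega/(1+\omega)$ for the semi-implicit one. *)

From mathcomp Require Import all_boot all_order all_algebra.
Set Implicit Arguments. Unset Strict Implicit. Unset Printing Implicit Defensive.
Import Order.TTheory GRing.Theory Num.Theory.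
Local Open Scope ring_scope.

(* One fixed discrete velocity q.  Populations are indexed by a time level
   t : int and a grid index i : int:  f t i = f^t_{q_i},  feq t i = f^{eq^t}_{q_i}. *)

Definition LBE (R : pzRingType) (w : R) (m : int) (f feq : int -> int -> R) : Prop :=
  forall (t i : int),
    f (t + 1) i = (1 - w) * f t (i - m) + w * feq t (i - m).

Definition fneq (R : pzRingType) (f feq : int -> int -> R) (t i : int) : R :=
  f t i - feq t i.

From mathcomp Require Import all_boot all_order all_algebra.
From mathcomp Require Import ring.
Set Implicit Arguments. Unset Strict Implicit. Unset Printing Implicit Defensive.
Import Order.TTheory GRing.Theory Num.Theory.
Local Open Scope ring_scope.

(* Unrolling the lattice Boltzmann recursion N times along the characteristic
   expresses f^{n+1}_i through the equilibria f^{eq^{n-k}} weighted by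
   w (1-w)^k and the remainder (1-w)^N f^{n-N+1}_{i-Nm}.  One more step from a
   population whose non-equilibrium part vanishes returns its equilibrium,
   since (1-w) x + w x = x. *)

Lemma int_sub_succ_mul (a b : int) (N : nat) :
  a - N%:Z * b - b = a - N.+1%:Z * b.
Proof. by rewrite -addn1 PoszD; ring. Qed.

Lemma int_sub_succ_add1 (a : int) (N : nat) : a - N.+1%:Z + 1 = a - N%:Z.
Proof. by rewrite -addn1 PoszD; ring. Qed.

Section Unrolling.

Variables (R : comPzRingType) (w : R) (m : int) (f feq : int -> int -> R).
Hypothesis lbe : LBE w m f feq.

Lemma LBE_unroll (n i : int) (N : nat) :
  f (n + 1) i =
    w * (\sum_(k < N) (1 - w) ^+ k * feq (n - k%:Z) (i - k.+1%:Z * m))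
    + (1 - w) ^+ N * f (n - N%:Z + 1) (i - N%:Z * m).
Proof.
elim: N => [|N IH].
  by rewrite big_ord0 mulr0 add0r expr0 mul1r subr0 mul0r subr0.
rewrite IH big_ord_recr /= lbe int_sub_succ_mul int_sub_succ_add1 exprS.
ring.
Qed.

Lemma LBE_step_fneq0 (t i : int) :
  fneq f feq t (i - m) = 0 -> f (t + 1) i = feq t (i - m).
Proof.
move/eqP; rewrite subr_eq0 => /eqP feq_f.
by rewrite lbe feq_f -mulrDl subrK mul1r.
Qed.

End Unrolling.

Theorem mainTheorem2 (R : realFieldType) (w : R) (m : int)
    (f feq : int -> int -> R) (n i : int) (N : nat) :
  LBE w m f feq ->
  fneq f feq (n - N%:Z) (i - (N.+1)%:Z * m) = 0 ->
  f (n + 1) i =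
    w * (\sum_(k < N) (1 - w) ^+ k * feq (n - k%:Z) (i - (k.+1)%:Z * m))
    + (1 - w) ^+ N * feq (n - N%:Z) (i - (N.+1)%:Z * m).
Proof.
move=> lbe fneq0.
by rewrite (LBE_unroll lbe n i N) (LBE_step_fneq0 lbe) int_sub_succ_mul.
Qed.
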